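(* Let $(X,d)$, $\mu$, $Y$ (countable), $f:X\to Y$ be as in the standing setting, fix an integer $K\ge2$, and let $\kappa:\mathbb{Z}^+\to\mathbb{Z}^+$ satisfy $\sum_{n=1}^\infty\rho^{\kappa(n)}=\infty$ for every $0<\rho\le1$. Let $\{z_n\}$ be generated by $\mathcal{S}(\kappa,\Phi)$ where $\Phi(x,S)=|V_S(x)|-\operatorname{modefreq}_f(V_S(x))$ with $V_S(x)$ the $K$-nearest neighbors of $x$ with respect to $S$. If $x\in X$ is contained in an $f$-contiguous component of positive $\mu$-measure, then $\zeta_n(x)\to f(x)$ with probability one.
   Context: Standing setting: $(X,d)$ metric space with probability measure $\mu$; $Y$ countable; $f:X\to Y$; $X_y=f^{-1}(y)$; $B_\epsilon(x)$ open ball; $\operatorname{supp}(\mu)=\{x:\mu(B_\epsilon(x))>0\ \forall\epsilon>0\}$. $b$ is an $f$-boundary point iff $\mu(B_\epsilon(b)\setminus X_{f(b)})>0$ for all $\epsilon>0$. $R\subseteq X$ is $f$-connected iff connected and $R\subseteq X_y$ for some $y$; $f$-contiguous iff $f$-connected, $R\subseteq\operatorname{supp}(\mu)$, and $R$ has no $f$-boundary points; an $f$-contiguous component is a maximal $f$-contiguous set. For finite $A$, $\operatorname{modefreq}_f(A)=\max_y|A\cap X_y|$ ($0$ if $A=\emptyset$). $K$-nearest neighbors: for finite $S\subseteq X$, let $\mathcal{V}_x$ be the family of $K$-element subsets $V\subseteq S$ minimizing distance to $x$ (i.e. no element outside $V$ is strictly closer to $x$ than some element of $V$); set $V_S(x)=\emptyset$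 if $x\in S$, and otherwise $V_S(x)=\arg\min_{V\in\mathcal{V}_x}\operatorname{modefreq}_f(V)$ (a minimizing set). Process $\mathcal{S}(\kappa,\Phi)$: $Z_0=\emptyset$; at step $n$ draw $\kappa(n)$ candidates i.i.d. from $\mu$, independent of the past; $z_n$ is a candidate maximizing $\Phi(\cdot,Z_{n-1})$ (ties uniformly at random); $Z_n=\{z_1,\dots,z_n\}$. Nearest neighbor prediction: $\zeta_n(x)=f(z_\iota)$, $\iota=\arg\min_{i\le n}d(x,z_i)$, ties uniformly at random. *)

From HB Require Import structures.
From mathcomp Require Import all_boot all_order all_algebra.
From mathcomp Require Import all_classical all_reals all_analysis.
Set Implicit Arguments. Unset Strict Implicit. Unset Printing Implicit Defensive.
Import Order.TTheory GRing.Theory Num.Theory.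
Local Open Scope classical_set_scope.
Local Open Scope ring_scope.

Section metric.
Context {R : realType} {X : pointedType}.
Variable dist : X -> X -> R.

Definition is_metric := [/\ (forall x y, dist x y = 0 <-> x = y),
  (forall x y, dist x y = dist y x) &
  (forall x y z, dist x z <= dist x y + dist y z)].

Definition mball (x : X) (e : R) : set X := [set y | dist x y < e].

Definition mopen (U : set X) : Prop :=
  forall x, U x -> exists2 e : R, 0 < e & mball x e `<=` U.

Definition mconnected (A : set X) : Prop :=
  forall U V : set X, mopen U -> mopen V -> A `<=` U `|` V ->
    A `&` U !=set0 -> A `&` V !=set0 -> A `&` U `&` V !=set0.

Variable mu : set X -> \bar R.
Variable Y : countType.
Variable f : X -> Y.

Definition supp : set X :=
  [set x | forall e : R, 0 < e -> (0 < mu (mball x e))%E].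

Definition fboundary (b : X) : Prop :=
  forall e : R, 0 < e -> (0 < mu (mball b e `\` f @^-1` [set f b]))%E.

Definition fconnected (A : set X) : Prop :=
  mconnected A /\ exists y : Y, A `<=` f @^-1` [set y].

Definition fcontiguous (A : set X) : Prop :=
  [/\ fconnected A, A `<=` supp & forall b, A b -> ~ fboundary b].

Definition fcomponent (A : set X) : Prop :=
  fcontiguous A /\ forall B, fcontiguous B -> A `<=` B -> B = A.

(* modefreq_f of a finite set (given duplicate-free as a seq); 0 if empty *)
Definition modefreq (V : seq X) : nat :=
  \max_(v <- V) count (fun w => f w == f v) V.

Definition powerseq (s : seq X) : seq (seq X) :=
  foldr (fun a acc => acc ++ map (cons a) acc) [:: [::]] s.

(* the family V_x of k-element subsets of S minimizing distance to x,
   k = min(K, |S|) *)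
Definition knn_family (K : nat) (x : X) (S : seq X) : seq (seq X) :=
  let S' := undup S in
  [seq V <- powerseq S' | (size V == minn K (size S')) &&
     all (fun v => all (fun s => (s \in V) || (dist x v <= dist x s)) S') V].

Definition argmin_seq {T : Type} (d : T) (F : T -> nat) (s : seq T) : T :=
  foldl (fun b a => if (F a < F b)%N then a else b) (head d s) (behead s).

Definition VS (K : nat) (x : X) (S : seq X) : seq X :=
  if x \in S then [::] else argmin_seq [::] modefreq (knn_family K x S).

Definition Phi (K : nat) (x : X) (S : seq X) : nat :=
  (size (VS K x S) - modefreq (VS K x S))%N.

(* choose an element of a finite list of ties uniformly at random,
   using a sample u uniform on [0,1) *)
Definition pick_tie {T : Type} (d : T) (u : R) (ties : seq T) : T :=
  nth d ties (minn (Num.truncn (u * (size ties)%:R)) (size ties).-1).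

(* one step of S(kappa,Phi): among candidates cs, pick a maximizer of score
   (ties uniformly at random via u) *)
Definition select (score : X -> nat) (cs : seq X) (u : R) : X :=
  let M := \max_(c <- cs) score c in
  pick_tie point u [seq c <- cs | score c == M].

(* Z_n = [z_1; ...; z_n], from candidate samples c n j (step n >= 1,
   j < kappa n) and tie-breaking samples u n *)
Fixpoint zs (K : nat) (kappa : nat -> nat) (c : nat -> nat -> X)
    (u : nat -> R) (n : nat) : seq X :=
  match n with
  | 0 => [::]
  | n'.+1 => let Z := zs K kappa c u n' in
      rcons Z (select (fun y => Phi K y Z) [seq c n j | j <- iota 0 (kappa n)] (u n))
  end.

(* nearest-neighbour prediction zeta_n(x), ties (among indices i <= n)
   broken uniformly at random via w *)
Definition nn_pred (x : X) (Z : seq X) (w : R) : Y :=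
  f (pick_tie point w [seq z <- Z | all (fun z' => dist x z <= dist x z') Z]).

End metric.

Notation Borel dist := (g_sigma_algebraType (mopen dist)).

From HB Require Import structures.
From mathcomp Require Import all_boot all_order all_algebra.
From mathcomp Require Import all_classical all_reals all_analysis.
From mathcomp Require Import ring lra.
Set Implicit Arguments. Unset Strict Implicit. Unset Printing Implicit Defensive.
Import Order.TTheory GRing.Theory Num.Theory.
Local Open Scope classical_set_scope.
Local Open Scope ring_scope.

(* Since x is not an f-boundary point, some ball B around x satisfies
   mu(B \ X_(f x)) = 0, and p := mu(B) > 0 because x lies in the support.
   Almost surely no candidate ever falls in B with a label other than f x
   (a countable union of null events).  The events "all kappa(n) candidates of
   step n lie in B" are independent of probability p^kappa(n); as
   sum p^kappa(n) diverges, prod (1 - p^kappa(n)) tends to 0, so almost surely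
   some step n0 has all its candidates in B, and then z_n0 lies in B whatever
   the selection rule.  From step n0 on, the sample nearest to x is no farther
   than z_n0, hence is a candidate lying in B, hence carries the label f x. *)

Definition sample_index (kappa : nat -> nat) (i : nat * nat) : bool :=
  (0 < i.1)%N && (i.2 < kappa i.1)%N.

Lemma exists_bigmax_seq {T : eqType} (g : T -> nat) (cs : seq T) : cs != [::] ->
  exists2 c, c \in cs & g c = \max_(c <- cs) g c.
Proof.
elim: cs => [//|a s IH] _; rewrite big_cons.
have [->|sn] := eqVneq s [::].
  by exists a; rewrite ?mem_head // big_nil maxn0.
have [c cs gc] := IH sn.
case: (leqP (g c) (g a)) => h.
  by exists a; rewrite ?mem_head // -gc (maxn_idPl h).
by exists c; rewrite ?inE ?cs ?orbT // -gc (maxn_idPr (ltnW h)).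
Qed.

Lemma exists_min_seq {R : realType} {T : eqType} (g : T -> R) (s : seq T) : s != [::] ->
  exists2 z, z \in s & all (fun z' => g z <= g z') s.
Proof.
elim: s => [//|a s IH] _.
have [->|sn] := eqVneq s [::]; first by exists a; rewrite ?mem_head //= lexx.
have [z zs hz] := IH sn.
case: (leP (g a) (g z)) => h.
  exists a; rewrite ?mem_head //= lexx /=.
  by apply/allP => y ys; apply: (le_trans h); exact: (allP hz).
by exists z; rewrite ?inE ?zs ?orbT //= (ltW h).
Qed.

Lemma pick_tie_mem {R : realType} {T : eqType} (d : T) (u : R) (ties : seq T) :
  ties != [::] -> pick_tie d u ties \in ties.
Proof.
move=> tn; apply: mem_nth; apply: (leq_ltn_trans (geq_minr _ _)).
by rewrite prednK // lt0n size_eq0.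
Qed.

Section selection.
Context {R : realType} {X : pointedType}.
Context (dist : X -> X -> R) {Y : countType} (f : X -> Y).

Lemma select_mem (score : X -> nat) (cs : seq X) (u : R) :
  cs != [::] -> select score cs u \in cs.
Proof.
move=> cn; have [c cin gc] := exists_bigmax_seq score cn.
set ties := [seq c0 <- cs | score c0 == \max_(c1 <- cs) score c1].
have cties : c \in ties by rewrite mem_filter gc eqxx cin.
have : pick_tie point u ties \in ties.
  by apply: pick_tie_mem; apply/eqP => tE; rewrite tE in cties.
by rewrite mem_filter => /andP[].
Qed.

Lemma nn_pred_spec (x : X) (Z : seq X) (w : R) : Z != [::] ->
  exists2 z, z \in Z & nn_pred dist f x Z w = f z /\
     forall z', z' \in Z -> dist x z <= dist x z'.
Proof.
move=> Zn; set L := [seq z <- Z | all (fun z' => dist x z <= dist x z') Z].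
have Ln : L != [::].
  have [z zin hz] := exists_min_seq (dist x) Zn.
  have zL : z \in L by rewrite mem_filter hz zin.
  by apply/eqP => LE; rewrite LE in zL.
have := pick_tie_mem point w Ln; rewrite mem_filter => /andP[ha hin].
by exists (pick_tie point w L) => //; split => // z' /(allP ha).
Qed.

Context {K : nat} {kappa : nat -> nat} {c : nat -> nat -> X} {u : nat -> R}.
Hypothesis kappa_gt0 : forall n, (0 < n)%N -> (0 < kappa n)%N.

Lemma zs_last_candidate n :
  exists2 j, (j < kappa n.+1)%N & last point (zs dist f K kappa c u n.+1) = c n.+1 j.
Proof.
rewrite /= last_rcons.
set cs := [seq c n.+1 j | j <- iota 0 (kappa n.+1)].
have : select (fun y => Phi dist f K y (zs dist f K kappa c u n)) cs (u n.+1) \in cs.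
  by apply: select_mem; rewrite -size_eq0 size_map size_iota -lt0n kappa_gt0.
by case/mapP => j; rewrite mem_iota add0n => /andP[_ hj] ->; exists j.
Qed.

Lemma mem_zs n z : z \in zs dist f K kappa c u n ->
  exists2 i, sample_index kappa i & z = c i.1 i.2.
Proof.
elim: n z => [//|n IH] z.
have [j hj zE] := zs_last_candidate n.
rewrite /= mem_rcons inE => /orP[/eqP ->|/IH //].
by exists (n.+1, j); rewrite -?zE /= ?last_rcons // /sample_index /= hj.
Qed.

Lemma zs_subset m n : (m <= n)%N ->
  {subset zs dist f K kappa c u m <= zs dist f K kappa c u n}.
Proof.
elim: n => [|n IH]; first by rewrite leqn0 => /eqP ->.
rewrite leq_eqVlt => /orP[/eqP -> //|]; rewrite ltnS => h z zm.
by rewrite /= mem_rcons inE (IH h z zm) orbT.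
Qed.

Lemma nn_pred_zs_eventually {x : X} {r : R} {m n : nat} {w : R} :
  (forall j, (j < kappa m.+1)%N -> dist x (c m.+1 j) < r) ->
  (forall k j, sample_index kappa (k, j) -> dist x (c k j) < r ->
     f (c k j) = f x) ->
  (m < n)%N -> nn_pred dist f x (zs dist f K kappa c u n) w = f x.
Proof.
move=> near_m label_near mn.
have [j0 hj0 lastE] := zs_last_candidate m.
set z0 := last point (zs dist f K kappa c u m.+1) in lastE.
have z0in : z0 \in zs dist f K kappa c u n.
  by apply: (zs_subset mn); rewrite /z0 /= last_rcons mem_rcons mem_head.
have Zn : zs dist f K kappa c u n != [::] by apply/eqP => ZE; rewrite ZE in z0in.
have [z zin [-> zmin]] := nn_pred_spec x w Zn.
have [[k j] kj zE] := mem_zs zin.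
rewrite zE; apply: label_near => //; rewrite -zE.
by apply: le_lt_trans (zmin _ z0in) _; rewrite lastE near_m.
Qed.

End selection.

Section divergent_product.
Variable R : realType.
Implicit Types a : nat -> R.

Lemma prod1B_mul_1Dsum_le1 a m N : (forall n, 0 <= a n <= 1) ->
  (\prod_(m <= n < N) (1 - a n)) * (1 + \sum_(m <= n < N) a n) <= 1.
Proof.
move=> a01; elim: N => [|N IH]; first by rewrite !big_geq // mulr1 addr0.
have [mN|Nm] := leqP m N; last by rewrite !big_geq // mulr1 addr0.
rewrite big_nat_recr //= big_nat_recr //=.
set Q := \prod_(m <= i < N) (1 - a i) in IH *.
set S := \sum_(m <= i < N) a i in IH *.
have Q0 : 0 <= Q by apply: prodr_ge0 => i _; have := a01 i; lra.
have S0 : 0 <= S by apply: sumr_ge0 => i _; have := a01 i; lra.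
have /andP[aN0 aN1] := a01 N.
have -> : Q * (1 - a N) * (1 + (S + a N)) =
          Q * (1 + S) - Q * a N * S - Q * a N ^+ 2 by ring.
have : 0 <= Q * a N * S by rewrite !mulr_ge0.
have : 0 <= Q * a N ^+ 2 by rewrite mulr_ge0 // sqr_ge0.
lra.
Qed.

Lemma divergent_series_partial_gt a : (forall n, 0 <= a n) ->
  (\sum_(1 <= n <oo) (a n)%:E = +oo)%E ->
  forall M : R, exists N, M < \sum_(1 <= n < N.+1) a n.
Proof.
move=> a0 a_oo M; apply/not_existsP => small.
have : (\sum_(1 <= n <oo) (a n)%:E <= M%:E)%E.
  apply: lime_le; first by apply: is_cvg_ereal_nneg_natsum => n _; rewrite lee_fin.
  exists 1%N => // -[|n] //= _.
  by rewrite sumEFin lee_fin leNgt; apply/negP; exact: small.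
by rewrite a_oo leye_eq.
Qed.

Lemma divergent_prod1B_lt a : (forall n, 0 <= a n <= 1) ->
  (\sum_(1 <= n <oo) (a n)%:E = +oo)%E ->
  forall r : R, 0 < r -> exists N, \prod_(1 <= n < N.+1) (1 - a n) < r.
Proof.
move=> a01 a_oo r r0.
have a0 n : 0 <= a n by have /andP[] := a01 n.
have [N sumN] := divergent_series_partial_gt a0 a_oo r^-1.
exists N; have := prod1B_mul_1Dsum_le1 1 N.+1 a01.
set Q := \prod_(1 <= n < N.+1) _; set S := \sum_(1 <= n < N.+1) _ in sumN *.
have Q0 : 0 <= Q by apply: prodr_ge0 => i _; have := a01 i; lra.
have rS : 1 < r * S by rewrite -ltr_pdivrMl // mulr1.
nra.
Qed.

End divergent_product.

Definition block (kappa : nat -> nat) (n : nat) : seq (nat * nat) :=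
  [seq (n, j) | j <- iota 0 (kappa n)].

Lemma mem_block kappa n i : (i \in block kappa n) = (i.1 == n) && (i.2 < kappa n)%N.
Proof.
apply/mapP/andP => [[j] | [/eqP <- ij]]; first by rewrite mem_iota add0n => /andP[_ ?] ->.
by exists i.2; rewrite ?mem_iota ?add0n //; case: i ij.
Qed.

Section independent_blocks.
Context {R : realType} {d : measure_display} {Omega : measurableType d}.
Variables (P : probability Omega R) (kappa : nat -> nat).
Variables (ev : nat * nat -> set Omega) (p : R).
Hypothesis ev_measurable : forall i, sample_index kappa i -> measurable (ev i).
Hypothesis ev_indep : forall s, uniq s -> all (sample_index kappa) s ->
  P (\bigcap_(i in [set` s]) ev i) = (p ^+ size s)%:E.

Let all_in (s : seq (nat * nat)) := \bigcap_(i in [set` s]) ev i.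

Let no_full_block N := \big[setI/setT]_(1 <= n < N.+1) ~` all_in (block kappa n).

Let all_in_measurable s : all (sample_index kappa) s -> measurable (all_in s).
Proof.
move=> sv; rewrite /all_in bigcap_seq big_seq.
by apply: bigsetI_measurable => i /(allP sv); exact: ev_measurable.
Qed.

Let all_in_cat s t : all_in (s ++ t) = all_in s `&` all_in t.
Proof. by rewrite /all_in !bigcap_seq big_cat. Qed.

Let block_uniq n : uniq (block kappa n).
Proof. by rewrite map_inj_uniq ?iota_uniq // => a b []. Qed.

Let block_sample_index n : (0 < n)%N -> all (sample_index kappa) (block kappa n).
Proof.
by move=> n0; apply/allP => i; rewrite mem_block /sample_index => /andP[/eqP -> ->]; rewrite n0.
Qed.

Let no_full_block_measurable N : measurable (no_full_block N).
Proof.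
rewrite /no_full_block big_seq.
apply: bigsetI_measurable => n /[!mem_index_iota] /andP[n0 _].
by apply: measurableC; apply: all_in_measurable; exact: block_sample_index.
Qed.

(* The conjunction over the later indices s is what lets the induction on N
   go through: P(A \ B) = P(A) - P(A & B), and A & B is of the same shape. *)
Lemma P_all_in_no_full_block N s :
  uniq s -> all (sample_index kappa) s -> all (fun i => (N < i.1)%N) s ->
  P (all_in s `&` no_full_block N) =
    (p ^+ size s * \prod_(1 <= n < N.+1) (1 - p ^+ kappa n))%:E.
Proof.
elim: N s => [|N IH] s us vs Ns.
  by rewrite /no_full_block big_geq // setIT ev_indep // big_geq // mulr1.
have sN : all (fun i => (N < i.1)%N) s by apply: sub_all Ns => i /ltnW.
have bN : all (fun i => (N < i.1)%N) (block kappa N.+1).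
  by apply/allP => i /[!mem_block] /andP[/eqP -> _].
have us' : uniq (s ++ block kappa N.+1).
  rewrite cat_uniq us block_uniq andbT; apply/hasPn => i /[!mem_block] /andP[/eqP iN _].
  by apply/negP => /(allP Ns); rewrite iN ltnn.
have vs' : all (sample_index kappa) (s ++ block kappa N.+1).
  by rewrite all_cat vs block_sample_index.
have -> : no_full_block N.+1 = no_full_block N `&` ~` all_in (block kappa N.+1).
  by rewrite /no_full_block big_nat_recr.
rewrite setIA -setDE.
have mA := all_in_measurable vs.
have mB := all_in_measurable (block_sample_index (ltn0Sn N)).
have mAN : measurable (all_in s `&` no_full_block N) by apply: measurableI.
have -> : P (all_in s `&` no_full_block N `\` all_in (block kappa N.+1)) =
    (P (all_in s `&` no_full_block N) -
     P (all_in (s ++ block kappa N.+1) `&` no_full_block N))%E.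
  by rewrite measureD ?ltey_eq ?fin_num_measure // all_in_cat setIAC.
rewrite (IH s) // (IH (s ++ _)) // ?all_cat ?sN //; apply: (congr1 EFin).
by rewrite size_cat exprD /block size_map size_iota [in RHS]big_nat_recr //=; ring.
Qed.

Hypothesis p_gt0 : 0 < p.
Hypothesis p_le1 : p <= 1.
Hypothesis kappa_divergent : (\sum_(1 <= n <oo) (p ^+ kappa n)%:E = +oo)%E.

Lemma ae_exists_full_block :
  {ae P, forall w, exists2 n, (0 < n)%N & forall j, (j < kappa n)%N -> ev (n, j) w}.
Proof.
set never := \bigcap_(n in [set n | (0 < n)%N]) ~` all_in (block kappa n).
have never_m : measurable never.
  apply: bigcap_measurable => [|n /= n0]; first by exists 1%N.
  by apply: measurableC; apply: all_in_measurable; exact: block_sample_index.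
have never_sub N : never `<=` no_full_block N.
  move=> w nw; rewrite /no_full_block -bigcap_seq => n /=.
  by rewrite mem_index_iota => /andP[n0 _]; exact: nw.
have a01 n : 0 <= p ^+ kappa n <= 1 by rewrite exprn_ge0 ?exprn_ile1 // ltW.
have Pnever_le N : (P never <= (\prod_(1 <= n < N.+1) (1 - p ^+ kappa n))%:E)%E.
  have := @P_all_in_no_full_block N [::] isT isT isT.
  rewrite /all_in set_nil bigcap_set0 setTI expr0 mul1r => <-.
  by rewrite le_measure ?inE //; exact: never_sub.
exists never; split => //; last first.
  move=> w /= nfull n /= n0; apply: contrapT => /contrapT full; apply: nfull.
  by exists n => // j jn; apply: full; rewrite /= mem_block eqxx.
apply/eqP; rewrite eq_le measure_ge0 andbT; apply/lee_addgt0Pr => r r0.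
have [N prodN] := divergent_prod1B_lt a01 kappa_divergent r0.
by rewrite add0e (le_trans (Pnever_le N)) // lee_fin ltW.
Qed.

End independent_blocks.

Lemma probability_gt0_EFin {R : realType} {d : measure_display} {T : measurableType d}
    (P : probability T R) (A : set T) :
  measurable A -> (0 < P A)%E -> exists2 p : R, P A = p%:E & 0 < p <= 1.
Proof.
move=> mA PA0; have PA_fin : P A \is a fin_num by rewrite fin_num_measure.
exists (fine (P A)); first by rewrite fineK.
by rewrite -lte_fin -lee_fin fineK // PA0 probability_le1.
Qed.

Section iid_candidates.
Context {R : realType} {d : measure_display} {Omega : measurableType d}.
Context {dT : measure_display} {T : measurableType dT}.
Variables (P : probability Omega R) (mu : probability T R).
Variables (kappa : nat -> nat) (C : nat -> nat -> Omega -> T).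
Hypothesis C_law : forall n j, (0 < n)%N -> (j < kappa n)%N ->
  measurable_fun setT (C n j) /\
  forall A : set T, measurable A -> P (C n j @^-1` A) = mu A.
Hypothesis C_indep : forall (s : seq (nat * nat)) (A : nat * nat -> set T),
  uniq s -> all (sample_index kappa) s -> (forall i, measurable (A i)) ->
  P (\bigcap_(i in [set` s]) (C i.1 i.2 @^-1` A i)) =
    (\prod_(i <- s) P (C i.1 i.2 @^-1` A i))%E.

Let preimage_measurable n j A : sample_index kappa (n, j) -> measurable A ->
  measurable (C n j @^-1` A).
Proof.
move=> /andP[n0 jk] mA; rewrite -[_ @^-1` _]setTI.
exact: (C_law n0 jk).1 measurableT A mA.
Qed.

Lemma ae_candidates_avoid_null N : measurable N -> mu N = 0%E ->
  {ae P, forall w n j, sample_index kappa (n, j) -> ~ N (C n j w)}.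
Proof.
move=> mN muN0; apply: ae_foralln => n; apply: ae_foralln => j.
have [nj|_] := boolP (sample_index kappa (n, j)); last by apply: aeW.
exists (C n j @^-1` N); split; first exact: preimage_measurable.
  by have /andP[n0 jk] := nj; exact: etrans ((C_law n0 jk).2 _ mN) muN0.
by move=> w /= /not_implyP[_ /contrapT].
Qed.

Lemma ae_exists_step_all_in B : measurable B -> (0 < mu B)%E ->
  (forall rho : R, 0 < rho <= 1 ->
     (\sum_(1 <= n <oo) (rho ^+ kappa n)%:E = +oo)%E) ->
  {ae P, forall w, exists2 n, (0 < n)%N & forall j, (j < kappa n)%N -> B (C n j w)}.
Proof.
move=> mB muB0 kappa_div.
have [p muB p01] := probability_gt0_EFin mB muB0.
have [p0 p1] := andP p01.
apply: (ae_exists_full_block (ev := fun i => C i.1 i.2 @^-1` B) (p := p)) => //.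
- by move=> [n j] nj; exact: preimage_measurable.
- move=> s us vs; rewrite C_indep // (eq_big_seq (fun=> p%:E)).
    by rewrite prodEFin big_const_seq count_predT iter_mulr_1.
  by move=> [n j] /(allP vs) /andP[n0 jk]; rewrite (C_law n0 jk).2.
- exact: kappa_div.
Qed.

End iid_candidates.

Lemma mball_measurable {R : realType} {X : pointedType} (dist : X -> X -> R) :
  (forall x y z, dist x z <= dist x y + dist y z) ->
  forall x r, measurable (mball dist x r : set (Borel dist)).
Proof.
move=> dist_tri x r; apply: sub_sigma_algebra => y xy.
exists (r - dist x y); first by rewrite subr_gt0.
by move=> z /= yz; apply: le_lt_trans (dist_tri x y z) _; rewrite -ltrBrDl.
Qed.

Lemma not_fboundary_null_ball {R : realType} {X : pointedType}
    (dist : X -> X -> R) (mu : set X -> \bar R) (Y : countType) (f : X -> Y) b :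
  (forall A, 0 <= mu A)%E -> ~ fboundary dist mu f b ->
  exists2 e : R, 0 < e & mu (mball dist b e `\` f @^-1` [set f b]) = 0%E.
Proof.
move=> mu_ge0 nb; apply: contrapT => no_null; apply: nb => e e0.
by rewrite lt0e mu_ge0 andbT; apply/negP => /eqP null; apply: no_null; exists e.
Qed.

Theorem theorem6 (R : realType) (X : pointedType) (dist : X -> X -> R)
  (mu : probability (Borel dist) R) (Y : countType) (f : X -> Y)
  (K : nat) (kappa : nat -> nat)
  (dO : measure_display) (Omega : measurableType dO) (P : probability Omega R)
  (C : nat -> nat -> Omega -> Borel dist) (U W : nat -> Omega -> R) (x : X) :
  is_metric dist ->
  (forall y : Y, measurable (f @^-1` [set y] : set (Borel dist))) ->
  (1 < K)%N ->
  (forall n, (0 < n)%N -> (0 < kappa n)%N) ->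
  (forall rho : R, 0 < rho <= 1 ->
     (\sum_(1 <= n <oo) (rho ^+ kappa n)%:E = +oo)%E) ->
  (forall n j, (0 < n)%N -> (j < kappa n)%N ->
     measurable_fun setT (C n j) /\
     forall A : set (Borel dist), measurable A -> P (C n j @^-1` A) = mu A) ->
  (forall n, (0 < n)%N ->
     measurable_fun setT (U n) /\
     forall A : set R, measurable A ->
       P (U n @^-1` A) = lebesgue_measure (A `&` [set r : R | 0 <= r < 1])) ->
  (forall n, (0 < n)%N ->
     measurable_fun setT (W n) /\
     forall A : set R, measurable A ->
       P (W n @^-1` A) = lebesgue_measure (A `&` [set r : R | 0 <= r < 1])) ->
  (forall (s1 : seq (nat * nat)) (s2 s3 : seq nat)
     (A : nat * nat -> set (Borel dist)) (B D : nat -> set R),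
     uniq s1 -> uniq s2 -> uniq s3 ->
     all (fun i => (0 < i.1)%N && (i.2 < kappa i.1)%N) s1 ->
     all (fun n => (0 < n)%N) s2 -> all (fun n => (0 < n)%N) s3 ->
     (forall i, measurable (A i)) -> (forall n, measurable (B n)) ->
     (forall n, measurable (D n)) ->
     P (\bigcap_(i in [set` s1]) (C i.1 i.2 @^-1` A i)
        `&` \bigcap_(n in [set` s2]) (U n @^-1` B n)
        `&` \bigcap_(n in [set` s3]) (W n @^-1` D n))
     = (\prod_(i <- s1) P (C i.1 i.2 @^-1` A i)
        * \prod_(n <- s2) P (U n @^-1` B n)
        * \prod_(n <- s3) P (W n @^-1` D n))%E) ->
  (exists A : set X, [/\ fcomponent dist mu f A, A x,
      measurable (A : set (Borel dist)) & (0 < mu A)%E]) ->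
  {ae P, forall w : Omega, exists N : nat, forall n : nat, (N <= n)%N ->
     nn_pred dist f x (zs dist f K kappa (fun m j => C m j w) (fun m => U m w) n)
       (W n w) = f x}.
Proof.
move=> [_ _ dist_tri] f_meas _ kappa_gt0 kappa_div C_law _ _ indep.
move=> [A [[[_ A_supp A_nb] _] Ax _ _]].
have C_indep s (A' : nat * nat -> set (Borel dist)) : uniq s ->
    all (sample_index kappa) s -> (forall i, measurable (A' i)) ->
    P (\bigcap_(i in [set` s]) (C i.1 i.2 @^-1` A' i)) =
      (\prod_(i <- s) P (C i.1 i.2 @^-1` A' i))%E.
  move=> us vs mA'; have := indep s [::] [::] A' (fun=> setT) (fun=> setT) us isT isT
    vs isT isT mA' (fun=> measurableT) (fun=> measurableT).
  by rewrite !set_nil !bigcap_set0 !setIT !big_nil !mule1.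
have [e e0 bad_null] := not_fboundary_null_ball (measure_ge0 mu) (A_nb x Ax).
have mB := mball_measurable dist_tri x e.
have mBad : measurable (mball dist x e `\` f @^-1` [set f x] : set (Borel dist)).
  exact: measurableD mB (f_meas (f x)).
have full := ae_exists_step_all_in C_law C_indep mB (A_supp x Ax e e0) kappa_div.
have good := ae_candidates_avoid_null C_law mBad bad_null.
apply: filterS2 full good => w [[|m] // _ fullw] goodw.
exists m.+1 => n mn.
apply: (nn_pred_zs_eventually (f := f) (K := K) (c := fun k j => C k j w)
  (u := fun k => U k w) kappa_gt0 fullw _ mn).
by move=> k j kj Bkj; apply: contrapT => neq; exact: goodw kj _.
Qed.
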